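(* Let $n\ge 1$ and let $a=(a_1,\dots,a_n)$ be an inversion sequence. Then $a$ avoids each of the patterns $100$, $102$ and $201$ if and only if $a$ can be written as a concatenation $a=p_1\circ q_2\circ q_3$ where: (i) $p_1$ is a (possibly empty) non-decreasing sequence with $\max(p_1)<\max(a)$ (if $p_1$ is nonempty); (ii) $q_2$ is a nonempty sequence whose entries all lie in $\{\max(a),\operatorname{premax}(a)\}$, whose first entry is $\max(a)$, and in which the value $\operatorname{premax}(a)$ occurs at most once; (iii) $q_3$ is a (possibly empty) strictly decreasing sequence all of whose entries are $<\operatorname{premax}(a)$. (When $a$ has only one distinct value, $\operatorname{premax}(a)$ is undefined; then $p_1$ and $q_3$ are empty and $q_2=a$ consists only of copies of $\max(a)$.)
   Context: An inversion sequence of length $n$ is an integer sequence $(a_1,\dots,a_n)$ with $0\le a_i<i$ for all $i$. A pattern is a sequence $\sigma$ of non-negative integers containing every value from $0$ to $\max(\sigma)$; the reduction of a sequence replaces its smallest values by $0$, the next smallest by $1$, etc. A sequence $a$ contains $\sigma$ if some (not necessarily consecutive) subsequence of $a$ has reduction $\sigma$; otherwise $a$ avoids $\sigma$. For a sequence $a$, $\max(a)$ is its largest value and $\operatorname{premax}(a)$ is the largest value of $a$ strictly less than $\max(a)$. $\circ$ denotes concatenation. *)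

From mathcomp Require Import all_boot.
Set Implicit Arguments. Unset Strict Implicit. Unset Printing Implicit Defensive.

(* Inversion sequence of length n, stored 0-indexed: a = [:: a_1; ...; a_n]
   with 0 <= a_i < i, i.e. nth 0 a i < i.+1 for i < n. *)
Definition inv_seq (n : nat) (a : seq nat) : Prop :=
  size a = n /\ forall i, i < n -> nth 0 a i < i.+1.

Definition reduction (s : seq nat) : seq nat :=
  [seq size (undup [seq y <- s | y < x]) | x <- s].

Definition contains (a sigma : seq nat) : Prop :=
  exists s, subseq s a /\ reduction s = sigma.

Definition avoids (a sigma : seq nat) : Prop := ~ contains a sigma.

(* max(a) (only used for nonempty a) *)
Definition smax (a : seq nat) : nat := \max_(x <- a) x.

(* premax(a): largest value strictly below max(a); None when undefined,
   i.e. when a has only one distinct value. *)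
Definition premax (a : seq nat) : option nat :=
  if has (fun x => x < smax a) a
  then Some (\max_(x <- a | x < smax a) x) else None.

Definition good_decomp (a p1 q2 q3 : seq nat) : Prop :=
  a = p1 ++ q2 ++ q3 /\
  match premax a with
  | Some pm =>
      sorted leq p1 /\ (p1 != [::] -> smax p1 < smax a) /\
      q2 != [::] /\ all (fun x => (x == smax a) || (x == pm)) q2 /\
      head 0 q2 = smax a /\ count_mem pm q2 <= 1 /\
      sorted (fun x y => y < x) q3 /\ all (fun x => x < pm) q3
  | None =>
      p1 = [::] /\ q3 = [::] /\ q2 != [::] /\ all (fun x => x == smax a) q2
  end.

From mathcomp Require Import all_boot zify.
Set Implicit Arguments. Unset Strict Implicit. Unset Printing Implicit Defensive.

(* The patterns 100, 102 and 201 are exactly the triples x y z with y < x, y <= z and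
   z <> x, so avoiding them forbids an entry that has a larger entry before it and a
   later entry at least as large, different from that larger one.  Cut a at its first
   maximum: before it the entries weakly increase, since a descent there forms such a
   triple with the maximum; after it the non-maximal entries strictly decrease; and an
   entry lying between two occurrences of the maximum dominates every non-maximal
   value, hence equals premax.  Conversely, in a decomposition as in the theorem the
   middle entry of such a triple can lie neither in p1, nor in q2, nor in q3. *)

Definition forbidden (x y z : nat) := [&& y < x, y <= z & z != x].

Lemma forbidden_reduction3 x y z :
  forbidden x y z =
  (reduction [:: x; y; z] \in [:: [:: 1; 0; 0]; [:: 1; 0; 2]; [:: 2; 0; 1]]).
Proof.
rewrite /forbidden /reduction /=.
case: (ltngtP x y) => xy; case: (ltngtP y z) => yz; case: (ltngtP x z) => xz;
  try (exfalso; lia); rewrite /= ?ltnn /= ?inE.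
all: case: (x =P z) => ?; case: (y =P z) => ?; case: (x =P y) => ?;
  first [reflexivity | exfalso; lia].
Qed.

Lemma size_reduction s : size (reduction s) = size s.
Proof. exact: size_map. Qed.

Lemma avoids3P a sigma : size sigma = 3 ->
  avoids a sigma <->
  forall x y z, subseq [:: x; y; z] a -> reduction [:: x; y; z] != sigma.
Proof.
move=> size_sigma; split=> [avoid x y z sub | free [s [sub red]]].
- by apply/eqP => red; apply: avoid; exists [:: x; y; z].
- have: size s = 3 by rewrite -size_reduction red.
  case: s sub red => [|x [|y [|z []]]] // sub red.
  by have := free x y z sub; rewrite red eqxx.
Qed.

Definition triple_free (a : seq nat) :=
  forall x y z, subseq [:: x; y; z] a -> ~~ forbidden x y z.

Lemma avoids_patterns_triple_free a :
  (avoids a [:: 1; 0; 0] /\ avoids a [:: 1; 0; 2] /\ avoids a [:: 2; 0; 1]) <->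
  triple_free a.
Proof.
rewrite !avoids3P //; split=> [[h100 [h102 h201]] x y z sub | free].
- rewrite forbidden_reduction3 !inE.
  by rewrite (negbTE (h100 x y z sub)) (negbTE (h102 x y z sub)) (negbTE (h201 x y z sub)).
- have avoid sigma x y z : sigma \in [:: [:: 1; 0; 0]; [:: 1; 0; 2]; [:: 2; 0; 1]] ->
      subseq [:: x; y; z] a -> reduction [:: x; y; z] != sigma.
    by move=> sigma3 sub; apply: contraNneq (free x y z sub); rewrite forbidden_reduction3 => ->.
  by split; [|split] => x y z; apply: avoid.
Qed.

Lemma gtn_trans : transitive (fun m n : nat => n < m).
Proof. exact: rev_trans ltn_trans. Qed.

Lemma count_mem_filter_uniq (T : eqType) (p : pred T) s y :
  p y -> uniq (filter p s) -> count_mem y s <= 1.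
Proof.
move=> py uniq_ps; have -> : count_mem y s = count_mem y (filter p s).
  by rewrite count_filter; apply: eq_count => x /=; case: eqP => [->|] //=; rewrite py.
by rewrite count_uniq_mem // leq_b1.
Qed.

Lemma sorted_subseq2 (T : eqType) (r : rel T) s x y :
  transitive r -> sorted r s -> subseq [:: x; y] s -> r x y.
Proof.
move=> r_tr; rewrite sorted_pairwise // => rs /subseq_pairwise/(_ rs) /=.
by rewrite !andbT.
Qed.

Lemma subseq_cat_split (T : eqType) (s t1 t2 : seq T) : subseq s (t1 ++ t2) ->
  exists s1 s2, [/\ s = s1 ++ s2, subseq s1 t1 & subseq s2 t2].
Proof.
case/subseqP => m size_m ->.
exists (mask (take (size t1) m) t1), (mask (drop (size t1) m) t2).
split; try exact: mask_subseq.
by rewrite -mask_cat ?cat_take_drop // size_takel // size_m size_cat leq_addr.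
Qed.

Lemma split_first (T : eqType) (x : T) s : x \in s ->
  exists u v, s = u ++ x :: v /\ x \notin u.
Proof.
move=> xs; exists (take (index x s) s), (drop (index x s).+1 s).
by rewrite -drop_index // cat_take_drop in_take // ltnn.
Qed.

Lemma split_last (T : eqType) (x : T) s : x \in s ->
  exists u v, s = u ++ x :: v /\ x \notin v.
Proof.
rewrite -mem_rev => /split_first[u [v [sE xu]]]; exists (rev v), (rev u).
by rewrite mem_rev -cat_rcons -rev_cons -rev_cat -sE revK.
Qed.

Lemma decreasing_split pm v :
  sorted (fun x y => y < x) v -> all (fun x => x <= pm) v ->
  exists t q3, [/\ v = t ++ q3, all (fun x => x == pm) t & all (fun x => x < pm) q3].
Proof.
case: v => [|h v] dec; first by exists [::], [::].
move=> /andP[h_le _]; have v_lt := order_path_min gtn_trans dec.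
have [hE | h_ne] := eqVneq h pm.
  by exists [:: h], v; rewrite /= hE eqxx -hE.
exists [::], (h :: v); split => //=; rewrite ltn_neqAle h_ne h_le /=.
by apply: sub_all v_lt => y /leq_trans; apply.
Qed.

Lemma smax_ub s x : x \in s -> x <= smax s.
Proof. by move=> xs; apply: (@leq_bigmax_seq _ s xpredT id x xs). Qed.

Lemma smax_in s : s != [::] -> smax s \in s.
Proof.
elim: s => // x s IH _; rewrite /smax big_cons inE.
case: s IH => [|y s] IH; first by rewrite big_nil maxn0 eqxx.
by rewrite /maxn; case: ltnP => _; rewrite ?eqxx ?IH ?orbT.
Qed.

Lemma premax_some a pm : premax a = Some pm ->
  [/\ pm \in a, pm < smax a & forall x, x \in a -> x < smax a -> x <= pm].
Proof.
rewrite /premax; case: ifP => // has_lt [<-].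
move: has_lt; rewrite has_filter => /smax_in.
rewrite /smax big_filter mem_filter => /andP[lt_max in_a]; split => // x xa x_lt.
exact: (@leq_bigmax_seq _ a (fun x => x < smax a) id x xa x_lt).
Qed.

Lemma premax_none a : premax a = None -> all (fun x => x == smax a) a.
Proof.
rewrite /premax; case: ifP => // /hasPn lt_max _; apply/allP => x xa.
by rewrite eqn_leq smax_ub // leqNgt lt_max.
Qed.

Lemma triple_free_subseq a b : subseq b a -> triple_free a -> triple_free b.
Proof. by move=> ba free x y z sub; apply: free (subseq_trans sub ba). Qed.

Lemma triple_free_cat s t : triple_free s -> triple_free t ->
  (forall x y z, subseq [:: x; y] s -> z \in t -> ~~ forbidden x y z) ->
  (forall x y z, x \in s -> subseq [:: y; z] t -> ~~ forbidden x y z) ->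
  triple_free (s ++ t).
Proof.
move=> free_s free_t left right x y z /subseq_cat_split[s1 [s2 [+ sub1 sub2]]].
case: s1 sub1 => [|x1 [|y1 [|z1 [|? ?]]]] sub1 //=.
- by move=> sE; apply: free_t; rewrite sE.
- by case=> -> sE; apply: right; rewrite -?sub1seq // sE.
- by case=> -> -> sE; apply: left; rewrite // -sub1seq sE.
- by case=> -> -> -> sE; apply: free_s; rewrite // -[[:: _; _; _]]cats0 sE.
Qed.

Lemma triple_free_sorted_rcons s m :
  triple_free (rcons s m) -> all (fun x => x < m) s -> sorted leq s.
Proof.
rewrite sorted_pairwise; last exact: leq_trans.
elim: s => //= x s IH free /andP[xm s_lt]; apply/andP; split; last first.
  by apply: IH s_lt; apply: triple_free_subseq free; apply: subseq_cons.
apply/allP => y ys.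
have sub : subseq [:: x; y; m] (x :: rcons s m).
  by rewrite /= eqxx -cats1; apply: (@cat_subseq _ [:: y] [:: m] s); rewrite ?sub1seq ?mem_head.
rewrite leqNgt; apply: contraNN (free x y m sub) => yx.
by rewrite /forbidden yx (ltnW (ltn_trans yx xm)) gtn_eqF.
Qed.

Lemma triple_free_below_decreasing m s :
  triple_free (m :: s) -> sorted (fun x y => y < x) [seq x <- s | x < m].
Proof.
rewrite sorted_pairwise; last exact: gtn_trans.
elim: s => //= x s IH free.
have free_s : triple_free (m :: s).
  exact: triple_free_subseq (cat_subseq (subseq_refl [:: m]) (subseq_cons s x)) free.
case: ifP => xm; last exact: IH.
rewrite pairwise_cons IH // andbT; apply/allP => z; rewrite mem_filter => /andP[zm zs].
have sub : subseq [:: m; x; z] (m :: x :: s) by rewrite /= !eqxx sub1seq.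
rewrite ltnNge; apply: contraNN (free m x z sub) => xz.
by rewrite /forbidden xm xz ltn_eqF.
Qed.

Lemma triple_free_between A y B m z : triple_free (A ++ y :: B) ->
  m \in A -> m \in B -> z \in A ++ y :: B -> z < m -> z <= y.
Proof.
move=> free mA mB; rewrite mem_cat inE => /or3P[zA | /eqP-> // | zB] zm;
  rewrite leqNgt; apply/negP => yz.
- have sub : subseq [:: z; y; m] (A ++ y :: B).
    by apply: (@cat_subseq _ [:: z] _ A); rewrite ?sub1seq //= eqxx sub1seq.
  by have := free z y m sub; rewrite /forbidden yz (ltnW (ltn_trans yz zm)) gtn_eqF.
- have sub : subseq [:: m; y; z] (A ++ y :: B).
    by apply: (@cat_subseq _ [:: m] _ A); rewrite ?sub1seq //= eqxx sub1seq.
  by have := free m y z sub; rewrite /forbidden (ltn_trans yz zm) (ltnW yz) ltn_eqF.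
Qed.

Lemma triple_free_between_premax a pm A y B :
  triple_free a -> premax a = Some pm -> a = A ++ y :: B ->
  smax a \in A -> smax a \in B -> y != smax a -> y = pm.
Proof.
move=> free pmE aE mA mB y_ne; have [pm_in pm_lt pm_max] := premax_some pmE.
have y_a : y \in a by rewrite aE mem_cat mem_head orbT.
apply/eqP; rewrite eqn_leq pm_max ?ltn_neqAle ?y_ne ?smax_ub //=.
by apply: (triple_free_between (A := A) (B := B) (m := smax a)); rewrite -?aE.
Qed.

Section Tail.

Variables (m pm : nat) (q2 q3 : seq nat).
Hypotheses (pm_lt_m : pm < m)
  (q2_vals : all (fun x => (x == m) || (x == pm)) q2) (q2_pm : count_mem pm q2 <= 1)
  (q3_dec : sorted (fun x y => y < x) q3) (q3_lt : all (fun x => x < pm) q3).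

Let q2_ge x : x \in q2 -> pm <= x.
Proof. by move/(allP q2_vals) => /orP[] /eqP->; rewrite ?(ltnW pm_lt_m). Qed.

Let q3_pair x y : subseq [:: x; y] q3 -> y < x.
Proof. exact: sorted_subseq2 gtn_trans q3_dec. Qed.

Lemma tail_pair_below y z : subseq [:: y; z] (q2 ++ q3) -> y < pm -> z < y.
Proof.
case/subseq_cat_split=> [[|y1 [|z1 [|? ?]]] [s2 [+ sub1 sub2]]] //= y_lt.
- by move=> sE; apply: q3_pair; rewrite sE.
- by case=> yE _; move: sub1; rewrite sub1seq -yE => /q2_ge; rewrite leqNgt y_lt.
- by case=> yE _ _; move/mem_subseq/(_ y1 (mem_head _ _)): sub1; rewrite -yE => /q2_ge;
    rewrite leqNgt y_lt.
Qed.

Lemma tail_triple_free : triple_free (q2 ++ q3).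
Proof.
apply: triple_free_cat => [x y z sub | x y z sub | x y z sub z_q3 | x y z _ sub].
- apply/negP => /and3P[yx yz zx].
  have val w : w \in [:: x; y; z] -> (w == m) || (w == pm).
    by move=> w_in; apply: (allP q2_vals); apply: mem_subseq sub _ w_in.
  have [yE zE] : y = pm /\ z = pm.
    by have := val x; have := val y; have := val z; rewrite !inE !eqxx !orbT; lia.
  have := leq_count_subseq (pred1 pm) (cons_subseq sub).
  by rewrite /= yE zE eqxx => /leq_trans/(_ q2_pm).
- by rewrite /forbidden (leqNgt y z) (q3_pair (cons_subseq sub)) andbF.
- have y_ge : pm <= y by apply: q2_ge; apply: (mem_subseq sub); rewrite !inE eqxx orbT.
  by rewrite /forbidden (leqNgt y z) (leq_trans (allP q3_lt z z_q3) y_ge) andbF.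
- by rewrite /forbidden (leqNgt y z) (q3_pair sub) andbF.
Qed.

End Tail.

Lemma good_decomp_triple_free a p1 q2 q3 : good_decomp a p1 q2 q3 -> triple_free a.
Proof.
case=> aE; case pmE: (premax a) => [pm|]; last first.
  move=> _ x y z sub; rewrite /forbidden.
  have max_a w : w \in [:: x; y; z] -> w = smax a.
    by move=> w_in; apply/eqP; apply: (allP (premax_none pmE)); apply: (mem_subseq sub).
  have [-> ->] : x = smax a /\ y = smax a by split; apply: max_a; rewrite !inE eqxx ?orbT.
  by rewrite ltnn.
case=> p1_sorted [p1_lt [_ [q2_vals [_ [q2_pm [q3_dec q3_lt]]]]]].
have [_ pm_lt pm_max] := premax_some pmE.
have p1_pair x y : subseq [:: x; y] p1 -> x <= y.
  exact: sorted_subseq2 leq_trans p1_sorted.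
rewrite aE; apply: triple_free_cat => [x y z sub | | x y z sub _ | x y z x_p1 sub].
- by rewrite /forbidden ltnNge (p1_pair x y (subseq_trans (prefix_subseq [:: x; y] [:: z]) sub)).
- exact: (tail_triple_free pm_lt).
- by rewrite /forbidden ltnNge p1_pair.
- apply/negP => /and3P[yx yz _].
  have x_lt_m : x < smax a.
    by apply: leq_ltn_trans (smax_ub x_p1) (p1_lt _); apply/eqP => p1E; rewrite p1E in x_p1.
  have x_le_pm : x <= pm by apply: pm_max x_lt_m; rewrite aE mem_cat x_p1.
  have := tail_pair_below pm_lt q2_vals q3_dec sub (leq_trans yx x_le_pm).
  by rewrite ltnNge yz.
Qed.

Section Construction.

Variables (a p1 b u v : seq nat) (m pm : nat).
Hypotheses (free : triple_free a) (mE : smax a = m) (pmE : premax a = Some pm)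
  (aE : a = p1 ++ m :: b) (bE : m :: b = u ++ m :: v)
  (m_p1 : m \notin p1) (m_v : m \notin v).

Let pm_lt : pm < m. Proof. by case: (premax_some pmE); rewrite mE. Qed.

Let pm_max x : x \in a -> x < m -> x <= pm.
Proof. by case: (premax_some pmE); rewrite mE => _ _; apply. Qed.

Let lt_m x : x \in a -> x != m -> x < m.
Proof. by move=> xa x_ne; rewrite ltn_neqAle x_ne -mE smax_ub. Qed.

Let mb_sub : subseq (m :: b) a. Proof. by rewrite aE suffix_subseq. Qed.

Let mv_sub : subseq (m :: v) a.
Proof. by apply: subseq_trans _ mb_sub; rewrite bE suffix_subseq. Qed.

Let v_in_a x : x \in v -> x \in a.
Proof. by move=> xv; apply: (mem_subseq mv_sub); rewrite inE xv orbT. Qed.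

Let p1_lt : all (fun x => x < m) p1.
Proof.
apply/allP => x xp1; apply: lt_m; first by rewrite aE mem_cat xp1.
by apply: contraNneq m_p1 => <-.
Qed.

Let p1_sorted : sorted leq p1.
Proof.
apply: triple_free_sorted_rcons (triple_free_subseq _ free) p1_lt.
by rewrite aE -cats1; apply: cat_subseq (subseq_refl p1) _; rewrite sub1seq mem_head.
Qed.

Let v_lt : all (fun x => x < m) v.
Proof. by apply/allP => x xv; apply: lt_m (v_in_a xv) _; apply: contraNneq m_v => <-. Qed.

Let v_dec : sorted (fun x y => y < x) v.
Proof.
have v_filter : [seq x <- v | x < m] = v by apply/all_filterP.
by rewrite -v_filter; apply: triple_free_below_decreasing (triple_free_subseq mv_sub free).
Qed.

Let v_le : all (fun x => x <= pm) v.
Proof. by apply/allP => x xv; apply: pm_max (v_in_a xv) (allP v_lt x xv). Qed.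

Let u_head : head m u = m.
Proof. by move: bE; case: u => [|x u'] // [<-]. Qed.

Let u_vals : all (fun x => (x == m) || (x == pm)) u.
Proof.
apply/allP => y yu; have [// | y_ne /=] := eqVneq y m.
have [A [B [uE _]]] := split_first yu.
have m_A : m \in A.
  case: A uE => [|x A] uE; move: bE; rewrite uE => -[xE _]; last by rewrite xE mem_head.
  by rewrite xE eqxx in y_ne.
apply/eqP; rewrite -mE in y_ne *.
apply: (triple_free_between_premax (A := p1 ++ A) (B := B ++ m :: v) free pmE).
- by rewrite aE bE uE -!catA.
- by rewrite mE mem_cat m_A orbT.
- by rewrite mE mem_cat mem_head orbT.
- exact: y_ne.
Qed.

Let b_pm : count_mem pm b <= 1.
Proof.
apply: (count_mem_filter_uniq (p := fun x => x < m)) pm_lt _.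
apply: sorted_uniq gtn_trans ltnn _ _.
exact: triple_free_below_decreasing (triple_free_subseq mb_sub free).
Qed.

Lemma good_decomp_split : exists t q3, good_decomp a p1 (u ++ m :: t) q3.
Proof.
have [t [q3 [vE t_pm q3_lt]]] := decreasing_split v_dec v_le.
have q2q3E : (u ++ m :: t) ++ q3 = m :: b by rewrite -catA /= -vE bE.
exists t, q3; rewrite /good_decomp pmE q2q3E -aE mE.
split=> //; split=> //; split; first by move/smax_in; apply: (allP p1_lt).
split; first by rewrite -size_eq0 size_cat addnS.
split; first by rewrite all_cat u_vals /= eqxx; apply: sub_all t_pm => x ->; rewrite orbT.
split; first by move: u_head; case: u.
split.
  apply: leq_trans _ b_pm; have := leq_count_subseq (pred1 pm) (prefix_subseq (u ++ m :: t) q3).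
  by rewrite q2q3E /= (gtn_eqF pm_lt).
split=> //.
by move: v_dec; rewrite vE; apply: (subseq_sorted (T := nat) gtn_trans (suffix_subseq t q3)).
Qed.

End Construction.

Lemma triple_free_good_decomp a : a != [::] -> triple_free a ->
  exists p1 q2 q3, good_decomp a p1 q2 q3.
Proof.
move=> a_ne free; case pmE: (premax a) => [pm|]; last first.
  exists [::], a, [::]; rewrite /good_decomp pmE cats0.
  by do !split => //; apply: premax_none.
have [p1 [b [aE m_p1]]] := split_first (smax_in a_ne).
have [u [v [bE m_v]]] := split_last (mem_head (smax a) b).
have [t [q3 good]] := good_decomp_split free erefl pmE aE bE m_p1 m_v.
by exists p1, (u ++ smax a :: t), q3.
Qed.

Theorem mainTheorem1 (n : nat) (a : seq nat) :
  1 <= n -> inv_seq n a ->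
  (avoids a [:: 1; 0; 0] /\ avoids a [:: 1; 0; 2] /\ avoids a [:: 2; 0; 1]) <->
  exists p1 q2 q3, good_decomp a p1 q2 q3.
Proof.
move=> n_pos [size_a _]; rewrite avoids_patterns_triple_free.
split=> [free | [p1 [q2 [q3 /good_decomp_triple_free]]] //].
by apply: triple_free_good_decomp free; rewrite -size_eq0 size_a -lt0n.
Qed.
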